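(* Let $X$ be an infinite dimensional separable Banach space, let $T$ be a bounded linear operator on $X$ and let $\varepsilon\in(0,1)$. Let $\mathcal{D}_1$ be a dense subset of $X$. Let $\mathcal{D}_2$ be a subset of $X$ such that $\mathcal{D}_2\cap B(x,\varepsilon\|x\|)\neq\emptyset$ for all $x\in X\setminus\{0\}$. Let $(n(k))_k\subset\mathbb{N}$ be an increasing sequence and let $S_{n(k)}:\mathcal{D}_2\to X$ be maps such that: (1) $\lim_{k\to\infty}\|T^{n(k)}x\|=0$ for all $x\in\mathcal{D}_1$; (2) $\lim_{k\to\infty}\|S_{n(k)}y\|=0$ for all $y\in\mathcal{D}_2$; (3) $\lim_{k\to\infty}\|T^{n(k)}S_{n(k)}y-y\|=0$ for all $y\in\mathcal{D}_2$. Then $T$ satisfies the Hypercyclicity Criterion.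
   Context: $B(x,r)$ is the closed ball of center $x$ and radius $r$. $T$ satisfies the Hypercyclicity Criterion if there exist a sequence of integers $(m(k))_k$, two dense sets $\mathcal{E}_1,\mathcal{E}_2\subset X$ and maps $U_{m(k)}:\mathcal{E}_2\to X$ such that $T^{m(k)}x\to0$ for all $x\in\mathcal{E}_1$, $U_{m(k)}y\to0$ and $T^{m(k)}U_{m(k)}y\to y$ for all $y\in\mathcal{E}_2$. *)

From HB Require Import structures.
From mathcomp Require Import all_boot all_order all_algebra.
From mathcomp Require Import all_classical all_reals all_analysis.
Set Implicit Arguments. Unset Strict Implicit. Unset Printing Implicit Defensive.
Import Order.TTheory GRing.Theory Num.Theory.
Import numFieldNormedType.Exports.
Local Open Scope classical_set_scope.
Local Open Scope ring_scope.

Definition separable (R : realType) (X : normedModType R) : Prop :=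
  exists D : set X, countable D /\ dense D.

Definition finite_dimensional (R : realType) (X : normedModType R) : Prop :=
  exists s : seq X, forall x : X,
    exists c : nat -> R, x = \sum_(i < size s) c i *: s`_i.

Definition infinite_dimensional (R : realType) (X : normedModType R) : Prop :=
  ~ finite_dimensional X.

Definition cball (R : realType) (X : normedModType R) (x : X) (r : R) : set X :=
  [set y | `|x - y| <= r].

Definition hypercyclicity_criterion (R : realType) (X : normedModType R)
    (T : X -> X) : Prop :=
  exists (m : nat -> nat) (E1 E2 : set X) (U : nat -> X -> X),
    dense E1 /\ dense E2 /\
    (forall x, E1 x -> (fun k => iter (m k) T x) @ \oo --> (0 : X)) /\
    (forall y, E2 y -> (fun k => U k y) @ \oo --> (0 : X)) /\
    (forall y, E2 y -> (fun k => iter (m k) T (U k y)) @ \oo --> y).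

(* The finite sums of elements of D2 are dense: approximating x by d1 ∈ D2
   within eps |x|, then the residual x - d1 by d2 ∈ D2 within eps |x - d1|,
   and so on, leaves a residual of norm at most eps^j |x| after j steps.
   Extending S additively to such sums (along a chosen decomposition), the
   conditions S_k y -> 0 and T^(n k) S_k y -> y survive finite sums because
   T^(n k) is additive. *)
From HB Require Import structures.
From mathcomp Require Import all_boot all_order all_algebra.
From mathcomp Require Import all_classical all_reals all_analysis.
Import Order.TTheory GRing.Theory Num.Theory.
Import numFieldNormedType.Exports.
Local Open Scope classical_set_scope.
Local Open Scope ring_scope.

Lemma iter_raddf_sum (V : zmodType) (f : {additive V -> V}) (m : nat)
    (I : Type) (r : seq I) (F : I -> V) :
  iter m f (\sum_(i <- r) F i) = \sum_(i <- r) iter m f (F i).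
Proof. by elim: m => [|m IHm] //=; rewrite IHm raddf_sum. Qed.

Section SumsOf.
Context {R : realType} {X : normedModType R}.
Implicit Types (D : set X) (x y : X).

Definition decompositions D y : set (seq X) :=
  [set s | {subset s <= D} /\ y = \sum_(d <- s) d].

Definition sums_of D : set X := [set y | decompositions D y !=set0].

Lemma dense_norm_approx (A : set X) :
  (forall x (e : R), 0 < e -> exists2 y, A y & `|x - y| < e) -> dense A.
Proof.
move=> approx O [x Ox] oO.
have /nbhs_normP[e /= e0 xeO] : nbhs x O by exact: open_nbhs_nbhs.
have [y Ay xy] := approx x e e0.
by exists y; split => //; apply: xeO.
Qed.

Section Geometric.
Context {D : set X} {eps : R}.
Hypothesis eps_ge0 : 0 <= eps.
Hypothesis D_near : forall x, x != 0 -> D `&` cball x (eps * `|x|) !=set0.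

Lemma sums_of_geometric_approx x (j : nat) :
  exists2 y, sums_of D y & `|x - y| <= eps ^+ j * `|x|.
Proof.
elim: j => [|j [y [s [sD ->]] xy]].
  by exists 0; [exists [::]; split; rewrite ?big_nil | rewrite subr0 expr0 mul1r].
have [r0|r_neq0] := eqVneq (x - \sum_(d <- s) d) 0.
  exists (\sum_(d <- s) d); first by exists s.
  by rewrite r0 normr0 mulr_ge0 ?exprn_ge0.
have [d [Dd rd]] := D_near _ r_neq0.
exists (\sum_(d' <- d :: s) d').
  by exists (d :: s); split => // d'; rewrite inE => /predU1P[->|/sD]; rewrite ?inE.
rewrite big_cons opprD addrA addrAC.
by apply: le_trans rd _; rewrite exprS -mulrA ler_wpM2l.
Qed.

Lemma dense_sums_of : eps < 1 -> dense (sums_of D).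
Proof.
move=> eps_lt1; apply: dense_norm_approx => x e e0.
have geo0 : (fun j => eps ^+ j * `|x|) @ \oo --> (0 : R).
  rewrite -(mul0r `|x|); apply: cvgM; last exact: cvg_cst.
  by apply: cvg_expr; rewrite ger0_norm.
have [j _ /(_ j (leqnn j)) /= geo_lt] := cvgr0_norm_lt _ geo0 _ e0.
have [y Dy xy] := sums_of_geometric_approx x j.
by exists y => //; apply: le_lt_trans xy (le_lt_trans (ler_norm _) geo_lt).
Qed.

End Geometric.

Lemma cvg_sum_seq {D : set X} {u : nat -> X -> X} {l : X -> X} {s : seq X} :
  {subset s <= D} -> (forall d, D d -> u k d @[k --> \oo] --> l d) ->
  \sum_(d <- s) u k d @[k --> \oo] --> \sum_(d <- s) l d.
Proof.
move=> sD ul; rewrite big_seq; under eq_cvg do rewrite big_seq.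
apply: cvg_big => [|d /sD]; first exact: add_continuous.
by rewrite inE; exact: ul.
Qed.

Section Additive_extension.
Variables (D : set X) (S : nat -> X -> X).

Definition decomposition y : seq X := xget [::] (decompositions D y).

Lemma decompositionP y : sums_of D y ->
  {subset decomposition y <= D} /\ y = \sum_(d <- decomposition y) d.
Proof.
by case=> s Ds; apply: (@xgetPex _ [::] (decompositions D y)); exists s.
Qed.

Definition sum_extension (k : nat) y : X :=
  \sum_(d <- decomposition y) S k d.

Lemma sum_extension_cvg0 :
  (forall d, D d -> S k d @[k --> \oo] --> 0) ->
  forall y, sums_of D y -> sum_extension k y @[k --> \oo] --> 0.
Proof.
move=> S0 y /decompositionP[yD _].
by have := cvg_sum_seq (l := fun=> 0) yD S0; rewrite big1.
Qed.

Lemma sum_extension_right_inverse (f : {additive X -> X}) (m : nat -> nat) :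
  (forall d, D d -> iter (m k) f (S k d) @[k --> \oo] --> d) ->
  forall y, sums_of D y -> iter (m k) f (sum_extension k y) @[k --> \oo] --> y.
Proof.
move=> fS y /decompositionP[yD {2}->].
under eq_cvg do rewrite /sum_extension iter_raddf_sum.
exact: cvg_sum_seq fS.
Qed.

End Additive_extension.
End SumsOf.

Theorem proposition5p1 (R : realType) (X : completeNormedModType R)
  (T : {linear X -> X}) (eps : R) (D1 D2 : set X) (n : nat -> nat)
  (S : nat -> X -> X) :
  separable X -> infinite_dimensional X -> continuous T ->
  0 < eps < 1 ->
  dense D1 ->
  (forall x : X, x != 0 -> D2 `&` cball x (eps * `|x|) !=set0) ->
  {homo n : a b / (a < b)%N} ->
  (forall x, D1 x -> (fun k => `|iter (n k) T x|) @ \oo --> (0 : R)) ->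
  (forall y, D2 y -> (fun k => `|S k y|) @ \oo --> (0 : R)) ->
  (forall y, D2 y -> (fun k => `|iter (n k) T (S k y) - y|) @ \oo --> (0 : R)) ->
  hypercyclicity_criterion T.
Proof.
move=> _ _ _ /andP[eps_gt0 eps_lt1] dD1 D2_near _ T0 S0 TS.
have dE2 : dense (sums_of D2) := dense_sums_of (ltW eps_gt0) D2_near eps_lt1.
exists n, D1, (sums_of D2), (sum_extension D2 S).
split => //; split => //; split.
  by move=> x /T0; exact: norm_cvg0.
split.
  by apply: sum_extension_cvg0 => y /S0; exact: norm_cvg0.
apply: (@sum_extension_right_inverse _ _ D2 S T n) => y /TS /norm_cvg0.
by rewrite subr_cvg0.
Qed.
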